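(* If $G=(V,E)$ is an atomic bispanning graph and $e,f\in E$ are two edges with $e\neq f$, then $G/e-f$ (contract $e$, then delete $f$) is a bispanning graph.
   Context: Graphs are finite, undirected, may have parallel edges, no loops. A spanning tree is $T\subseteq E$ with $(V,T)$ connected and acyclic; $G$ is bispanning if $E$ is the union of two disjoint spanning trees; a bispanning graph is atomic if its only bispanning subgraphs are itself and single vertices. Contracting an edge $e$ with ends $p,q$ replaces $p,q$ by a single new vertex, deletes all edges with both ends in $\{p,q\}$, and makes other edges incident to $p$ or $q$ incident to the new vertex. *)

(* Multigraphs on a fixed vertex type V and edge type E,
   given by endpoint maps s t : E -> V.  A (sub)graph is a pair (W, F)
   of a vertex set W : {set V} and an edge set F : {set E}. *)
From mathcomp Require Import all_boot.
Set Implicit Arguments. Unset Strict Implicit. Unset Printing Implicit Defensive.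

Section Graphs.
Variables (V E : finType) (s t : E -> V).

Definition joins (z : E) (x y : V) : bool :=
  ((s z == x) && (t z == y)) || ((s z == y) && (t z == x)).

Definition inside (W : {set V}) (F : {set E}) : Prop :=
  forall z, z \in F -> s z \in W /\ t z \in W.

Definition adj (T : {set E}) : rel V :=
  [rel x y | [exists z in T, joins z x y]].

Definition connected (W : {set V}) (T : {set E}) : Prop :=
  W != set0 /\ forall x y, x \in W -> y \in W -> connect (adj T) x y.

(* (_, T) has no cycle: no cyclic sequence of k+1 distinct edges through
   k+1 distinct vertices (k = 0: a loop; k = 1: two parallel edges) *)
Definition acyclic (T : {set E}) : Prop :=
  forall k (es : 'I_k.+1 -> E) (vs : 'I_k.+1 -> V),
    injective es -> injective vs -> (forall i, es i \in T) ->
    ~ (forall i, joins (es i) (vs i) (vs (ordS i))).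

Definition spanning_tree (W : {set V}) (F T : {set E}) : Prop :=
  T \subset F /\ connected W T /\ acyclic T.

Definition bispanning (W : {set V}) (F : {set E}) : Prop :=
  inside W F /\
  exists T1 T2 : {set E},
    [/\ spanning_tree W F T1, spanning_tree W F T2,
        [disjoint T1 & T2] & T1 :|: T2 = F].

Definition atomic : Prop :=
  bispanning [set: V] [set: E] /\
  forall (W : {set V}) (F : {set E}),
    bispanning W F ->
    (W = [set: V] /\ F = [set: E]) \/ (exists v, W = [set v] /\ F = set0).

(* contraction of edge e (ends p = s e, q = t e): q is identified with p *)
Definition merge (e : E) (x : V) : V := if x == t e then s e else x.

End Graphs.

Definition contr_s (V E : finType) (s t : E -> V) (e : E) : E -> V :=
  fun z => merge s t e (s z).
Definition contr_t (V E : finType) (s t : E -> V) (e : E) : E -> V :=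
  fun z => merge s t e (t z).
Definition contr_del_V (V E : finType) (s t : E -> V) (e : E) : {set V} :=
  [set: V] :\ t e.
Definition contr_del_E (V E : finType) (s t : E -> V) (e f : E) : {set E} :=
  [set z | ~~ ((s z \in [set s e; t e]) && (t z \in [set s e; t e]))] :\ f.

From Pilot Require Import Defs.
From mathcomp Require Import all_boot zify.
Set Implicit Arguments. Unset Strict Implicit. Unset Printing Implicit Defensive.

(** Since [G] is the disjoint union of two spanning trees, [#|E| = 2 (#|V| - 1)], so
    [E \ {e, f}] has exactly as many edges as two spanning trees of [G/e]: it suffices to split
    it into two parts that are forests of [G/e], i.e. forests of [G] once [e] is added.
    The augmenting-path algorithm of matroid partition either finds such a split or stops at a
    set [R] such that [e |: R] is spanned twice by at most [#|e |: R|] edges. Then the two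
    spanning trees of [G] restricted to [e |: R] must both span it, and the component of [e |: R]
    through [e] is a bispanning subgraph containing [e] but not [f], against atomicity.
    If some edge is parallel to [e], it forms with [e] a bispanning subgraph, so [G] is that
    digon and [G/e - f] is a single vertex. *)

Lemma connect_ind (T : finType) (r : rel T) (P : T -> Prop) x :
  P x -> (forall y z, P y -> r y z -> P z) -> forall y, connect r x y -> P y.
Proof.
move=> Px step y /connectP [p pth ->]; elim: p x Px pth => [|z p IH] x Px //=.
by case/andP=> rxz pth; apply: (IH z) => //; apply: step rxz.
Qed.

Section Forests.
Variables (V E : finType) (s t : E -> V).

Definition linked (T : {set E}) : rel V := connect (adj s t T).

Definition forest (T : {set E}) : bool :=
  [forall z in T, ~~ linked (T :\ z) (s z) (t z)].

Lemma adj_sym (T : {set E}) : symmetric (adj s t T).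
Proof.
move=> x y; apply/existsP/existsP => -[z /andP [zT j]]; exists z;
  by rewrite zT /=; move: j; rewrite /joins; case/orP=> ->; rewrite ?orbT.
Qed.

Lemma linked_sym (T : {set E}) x y : linked T x y = linked T y x.
Proof. exact: (sym_connect_sym (adj_sym T)). Qed.

Lemma linked_trans (T : {set E}) y x z : linked T x y -> linked T y z -> linked T x z.
Proof. exact: connect_trans. Qed.

Lemma linked_refl (T : {set E}) x : linked T x x.
Proof. exact: connect0. Qed.

Lemma linked_joins (T : {set E}) z x y : z \in T -> joins s t z x y -> linked T x y.
Proof. by move=> zT jz; apply: connect1; apply/existsP; exists z; rewrite zT. Qed.

Lemma linked_edge (T : {set E}) z : z \in T -> linked T (s z) (t z).
Proof. by move=> zT; apply: linked_joins zT _; rewrite /joins !eqxx. Qed.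

Lemma adjP (T : {set E}) x y : adj s t T x y ->
  exists2 z, z \in T & (x = s z /\ y = t z) \/ (x = t z /\ y = s z).
Proof.
case/existsP=> z /andP [zT]; rewrite /joins => j; exists z => //.
by case/orP: j => /andP [/eqP-> /eqP->]; [left|right].
Qed.

Lemma linked_span (K L : {set E}) : (forall z, z \in K -> linked L (s z) (t z)) ->
  forall x y, linked K x y -> linked L x y.
Proof.
move=> KL x; apply: connect_ind; first exact: linked_refl.
move=> y w xy /adjP [z zK [[? ?]|[? ?]]]; subst; apply: linked_trans xy _; first exact: KL.
by rewrite linked_sym; apply: KL.
Qed.

Lemma linkedS (K L : {set E}) x y : K \subset L -> linked K x y -> linked L x y.
Proof. by move=> /subsetP KL; apply: linked_span => z /KL; apply: linked_edge. Qed.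

Lemma linked0 x y : linked set0 x y -> x = y.
Proof.
move: y; apply: (connect_ind (P := eq x)) => // y w _ /existsP [z].
by rewrite inE.
Qed.

Definition near_edge (L : {set E}) z x := linked L x (s z) || linked L x (t z).

Lemma linked_setD1 (L : {set E}) z a b : linked L a b ->
  linked (L :\ z) a b \/ (near_edge (L :\ z) z a /\ near_edge (L :\ z) z b).
Proof.
move: b; apply: connect_ind; first by left; exact: linked_refl.
move=> y w ay /adjP [z' z'L yw]; have [?|z'z] := eqVneq z' z.
  subst z'; right; split.
    case: ay => [ay|[] //]; rewrite /near_edge.
    by case: yw => -[<- _]; rewrite ay ?orbT.
  by case: yw => -[_ ->]; rewrite /near_edge linked_refl ?orbT.
have yw' : linked (L :\ z) y w.
  apply: (@linked_joins _ z'); first by rewrite !inE z'z.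
  by rewrite /joins; case: yw => -[-> ->]; rewrite !eqxx ?orbT.
case: ay => [ay|[na ny]]; first by left; apply: linked_trans ay yw'.
right; split => //; rewrite linked_sym in yw'; rewrite /near_edge.
by case/orP: ny => h; rewrite (linked_trans yw' h) ?orbT.
Qed.

Lemma linked_setD1_cross (L : {set E}) z a b : linked L a b ->
  [\/ linked (L :\ z) a b,
      linked (L :\ z) (s z) a /\ linked (L :\ z) (t z) b
    | linked (L :\ z) (s z) b /\ linked (L :\ z) (t z) a].
Proof.
case/(linked_setD1 z) => [|[]]; first by constructor 1.
rewrite /near_edge => /orP [] az /orP [] bz.
- by constructor 1; apply: linked_trans az _; rewrite linked_sym.
- by constructor 2; split; rewrite linked_sym.
- by constructor 3; split; rewrite linked_sym.
- by constructor 1; apply: linked_trans az _; rewrite linked_sym.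
Qed.

Lemma forestP (T : {set E}) :
  reflect (forall z, z \in T -> ~~ linked (T :\ z) (s z) (t z)) (forest T).
Proof. exact: forall_inP. Qed.

Lemma forest0 : forest set0.
Proof. by apply/forestP => z; rewrite inE. Qed.

Lemma forest1 z : s z != t z -> forest [set z].
Proof.
move=> nlz; apply/forestP => _ /set1P ->; rewrite setDv.
by apply/negP => /linked0 stz; rewrite stz eqxx in nlz.
Qed.

Lemma forestS (A B : {set E}) : forest A -> B \subset A -> forest B.
Proof.
move=> /forestP fA BA; apply/forestP => z zB; apply: contra (fA z (subsetP BA z zB)).
by apply: linkedS; apply: setSD.
Qed.

Lemma forestU1 (A : {set E}) u : forest A -> ~~ linked A (s u) (t u) -> forest (u |: A).
Proof.
move=> /forestP fA nu; apply/forestP => y; rewrite in_setU1.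
have uA : u \notin A by apply: contra nu; exact: linked_edge.
have [->|yu /= yA] := eqVneq y u; first by rewrite setU1K.
apply/negP => h.
have sub : (u |: A) :\ y :\ u \subset A :\ y.
  apply/subsetP=> w; rewrite !inE; case/and3P=> wu -> /orP [/eqP wu'|->] //.
  by rewrite wu' eqxx in wu.
have subA : (u |: A) :\ y :\ u \subset A := subset_trans sub (subsetDl _ _).
have yyA := linked_edge yA.
case/(linked_setD1_cross u): h => [h|[h1 h2]|[h1 h2]].
- by move/negP: (fA y yA); apply; apply: linkedS sub h.
- move/negP: nu; apply; apply: linked_trans (linkedS subA h1) (linked_trans yyA _).
  by rewrite linked_sym; apply: linkedS subA h2.
- move/negP: nu; apply; apply: linked_trans (linkedS subA h1) (linked_trans (y := s y) _ _).
    by rewrite linked_sym.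
  by rewrite linked_sym; apply: linkedS subA h2.
Qed.

Lemma linked_of_not_forestU1 (A : {set E}) u :
  forest A -> ~~ forest (u |: A) -> linked A (s u) (t u).
Proof. by move=> fA; apply: contraR; apply: forestU1. Qed.

Lemma linked_setD2 (A : {set E}) w w' a b : forest A -> w' \in A ->
  linked (A :\ w) a b -> linked (A :\ w') a b -> linked (A :\ w :\ w') a b.
Proof.
move=> /forestP fA w'A h1 h2.
have sub : A :\ w :\ w' \subset A :\ w' by apply: setSD; apply: subsetDl.
move/negP: (fA w' w'A) => nw'.
case/(linked_setD1_cross w'): h1 => [//|[]|[]] /(linkedS sub) n1 /(linkedS sub) n2;
  exfalso; apply: nw'.
- by apply: (linked_trans n1); apply: (linked_trans h2); rewrite linked_sym.
- by apply: (linked_trans n1); apply: (linked_trans (y := a)); rewrite linked_sym.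
Qed.

Lemma exists_bridge (A S : {set E}) a b : forest A -> S \subset A ->
  linked A a b -> ~~ linked S a b ->
  exists w, [/\ w \in A, w \notin S & ~~ linked (A :\ w) a b].
Proof.
move: {2}#|A :\: S| (erefl #|A :\: S|) => n.
elim: n A => [|n IH] A hn fA SA ab nab.
  move/eqP: hn; rewrite cards_eq0 setD_eq0 => AS.
  by move: nab; rewrite (linkedS AS ab).
have [w wAS] : exists w, w \in A :\: S by apply/set0Pn; rewrite -card_gt0 hn.
move: (wAS); rewrite inE => /andP [wS wA].
have [abw|] := boolP (linked (A :\ w) a b); last by exists w.
have hn' : #|(A :\ w) :\: S| = n.
  rewrite setDDl setUC -setDDl.
  by move: hn; rewrite (cardsD1 w) wAS add1n => -[].
have SAw : S \subset A :\ w.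
  by apply/subsetP => x xS; rewrite !inE (subsetP SA x xS) andbT; apply: contraNneq wS => <-.
have [w' [/setD1P [_ w'A] w'S nw']] := IH _ hn' (forestS fA (subsetDl _ _)) SAw abw nab.
exists w'; split => //; apply: contra nw' => h.
exact: linked_setD2.
Qed.

Lemma forest_card_le (T K : {set E}) : forest T ->
  (forall z, z \in T -> linked K (s z) (t z)) -> #|T| <= #|K|.
Proof.
move: {2}#|T :\: K| (erefl #|T :\: K|) => n.
elim: n T => [|n IH] T hn fT sp.
  by move/eqP: hn; rewrite cards_eq0 setD_eq0 => TK; apply: subset_leq_card.
have [z zTK] : exists z, z \in T :\: K by apply/set0Pn; rewrite -card_gt0 hn.
move: (zTK); rewrite inE => /andP [zK zT].
have nz : ~~ linked (T :\ z) (s z) (t z) by move/forestP: fT; apply.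
have [k kK nk] : exists2 k, k \in K & ~~ linked (T :\ z) (s k) (t k).
  apply/exists_inP; apply: contraR nz; rewrite negb_exists_in => /forall_inP kT.
  by apply: (linked_span _ (sp z zT)) => k /kT; rewrite negbK.
have kT : k \notin T :\ z by apply: contra nk; apply: linked_edge.
have fT' : forest (k |: (T :\ z)) by apply: forestU1 => //; apply: forestS fT (subsetDl _ _).
have -> : #|T| = #|k |: (T :\ z)| by rewrite cardsU1 kT (cardsD1 z T) zT.
apply: IH fT' _ => [|y /setU1P [->|/setD1P [_ /sp //]]]; last exact: linked_edge.
have -> : (k |: (T :\ z)) :\: K = (T :\: K) :\ z.
  by apply/setP => x; rewrite !inE; have [->|] := eqVneq x k; rewrite ?kK ?andbF // andbCA.
by move: hn; rewrite (cardsD1 z) zTK add1n => -[].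
Qed.

(* Adding an edge of [F] not spanned by [Tf] would give a forest larger than [K]. *)
Lemma forest_spans (Tf K F : {set E}) : forest Tf -> Tf \subset F ->
  (forall z, z \in F -> linked K (s z) (t z)) -> #|K| <= #|Tf| ->
  forall z, z \in F -> linked Tf (s z) (t z).
Proof.
move=> fT TF sp ck z zF; apply/negPn/negP => nz.
have zT : z \notin Tf by apply: contra nz; apply: linked_edge.
suff : #|Tf| < #|K| by rewrite ltnNge ck.
have := forest_card_le (forestU1 fT nz) (K := K); rewrite cardsU1 zT add1n; apply.
by move=> y /setU1P [->|/(subsetP TF) yF]; apply: sp.
Qed.

End Forests.

Section Cycles.
Variables (V E : finType) (s t : E -> V).
Local Notation linked := (linked s t).
Local Notation forest := (forest s t).

Lemma joins_ends z a b c d : joins s t z a b -> joins s t z c d ->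
  (a = c /\ b = d) \/ (a = d /\ b = c).
Proof.
by rewrite /joins => /orP [] /andP [/eqP <- /eqP <-] /orP [] /andP [/eqP <- /eqP <-];
  [left|right|right|left].
Qed.

Lemma joins_linked (L : {set E}) z x y :
  joins s t z x y -> linked L x y = linked L (s z) (t z).
Proof. by case/orP => /andP [/eqP <- /eqP <-]; rewrite // linked_sym. Qed.

Lemma cycle_linked (L : {set E}) k (es : 'I_k.+1 -> E) (vs : 'I_k.+1 -> V) :
  (forall i, i != ord0 -> es i \in L) ->
  (forall i, joins s t (es i) (vs i) (vs (ordS i))) ->
  linked L (vs (ordS ord0)) (vs ord0).
Proof.
move=> esL hj.
have ordS_inord n : n < k -> ordS (inord n : 'I_k.+1) = inord n.+1.
  by move=> nk; apply: val_inj; rewrite /= !inordK ?modn_small //; lia.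
suff walk n : n <= k -> linked L (vs (ordS ord0)) (vs (ordS (inord n))).
  have -> : vs ord0 = vs (ordS (inord k)).
    by congr vs; apply: val_inj; rewrite /= inordK ?modnn.
  exact: walk.
elim: n => [_|n IH nk].
  by rewrite (_ : inord 0 = ord0) ?linked_refl //; apply: val_inj; rewrite /= inordK.
apply: linked_trans (IH (ltnW nk)) _; rewrite ordS_inord //.
apply: linked_joins (hj _); apply: esL; apply/eqP => /(congr1 val).
by rewrite /= inordK.
Qed.

Lemma forest_acyclic (T : {set E}) : forest T -> acyclic s t T.
Proof.
move=> /forestP fT k es vs ies ivs esT hj.
have : linked (T :\ es ord0) (vs (ordS ord0)) (vs ord0).
  apply: cycle_linked hj => i i0; rewrite !inE esT andbT.
  by apply: contra i0 => /eqP /ies ->.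
by rewrite linked_sym (joins_linked _ (hj ord0)); apply/negP/fT.
Qed.

Lemma path_edges (L : {set E}) (z0 : E) x p : path (adj s t L) x p ->
  exists w : nat -> E, forall x0 i, i < size p ->
    w i \in L /\ joins s t (w i) (nth x0 (x :: p) i) (nth x0 (x :: p) i.+1).
Proof.
elim: p x => [|y p IH] x /=; first by exists (fun=> z0).
case/andP => /existsP [z /andP [zL jz]] /IH [w hw].
by exists (fun i => if i is i'.+1 then w i' else z) => x0 [|i] //=; rewrite ltnS => /hw.
Qed.

Lemma joins_nth_inj (c : seq V) x0 z i j : uniq c -> i.+1 < size c -> j.+1 < size c ->
  joins s t z (nth x0 c i) (nth x0 c i.+1) -> joins s t z (nth x0 c j) (nth x0 c j.+1) ->
  i = j.
Proof.
move=> uc ic jc ji jj.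
have nth_inj a b : a < size c -> b < size c -> nth x0 c a = nth x0 c b -> a = b.
  by move=> ha hb /eqP; rewrite nth_uniq // => /eqP.
case: (joins_ends ji jj) => [[/nth_inj -> //]|[/nth_inj h1 /nth_inj h2]]; lia.
Qed.

Lemma acyclic_forest (T : {set E}) : acyclic s t T -> forest T.
Proof.
move=> ac; apply/forestP => z zT; apply/negP; rewrite linked_sym => /connectP [p pth lst].
case: (shortenP pth) lst => c pthc uc _ lst.
have [w hw] := path_edges z pthc.
(* The cycle runs along [t z :: c] and returns to [t z] through [z]. *)
set m := size c.
pose es (i : 'I_m.+1) := if val i == m then z else w i.
pose vs (i : 'I_m.+1) := nth (t z) (t z :: c) i.
have ltm (i : 'I_m.+1) : val i != m -> i < m.
  by move=> im; rewrite ltn_neqAle im -ltnS ltn_ord.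
have esP (i : 'I_m.+1) : es i \in T /\ joins s t (es i) (vs i) (vs (ordS i)).
  rewrite /es /vs /=; case: (eqVneq (val i) m) => [im|/ltm im].
    by rewrite im modnn -last_nth -lst /joins !eqxx.
  by rewrite modn_small //; case: (hw (t z) i im) => /setD1P [].
apply: (ac m es vs) => [i j|i j|i|i]; try by case: (esP i).
  rewrite /es; case: (eqVneq (val i) m) => [im|/ltm im];
    case: (eqVneq (val j) m) => [jm|/ltm jm].
  - by move=> _; apply: val_inj; rewrite im jm.
  - by move=> zj; case: (hw (t z) j jm); rewrite -zj !inE eqxx.
  - by move=> zi; case: (hw (t z) i im); rewrite zi !inE eqxx.
  move=> wij; apply: val_inj; apply: (@joins_nth_inj (t z :: c) (t z) (w i)) => //.
    by case: (hw (t z) i im).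
  by rewrite wij; case: (hw (t z) j jm).
by move=> /eqP; rewrite /vs nth_uniq // => /eqP /val_inj.
Qed.

End Cycles.

Section Partition.
Variables (V E : finType) (s t : E -> V) (e : E).
Local Notation linked := (linked s t).
Local Notation forest := (forest s t).

(* Independence in the cycle matroid of [G/e]. *)
Definition indep (X : {set E}) := forest (e |: X).

Definition indep_pair (I : bool -> {set E}) :=
  [/\ forall x, x \in I true -> x \notin I false, forall j, indep (I j)
    & forall j, e \notin I j].

(* The exchange graph of matroid partition: [y] may replace [w] in the part of [w]. *)
Definition exchange (I : bool -> {set E}) : rel E := fun y w =>
  (y != e) && [exists j, [&& w \in I j, y \notin I j & indep (y |: (I j :\ w))]].

Definition insertable (I : bool -> {set E}) y :=
  [exists j, (y \notin I j) && indep (y |: I j)].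

Definition insert_in (I : bool -> {set E}) j x b := if b == j then x |: I j else I b.

Definition move_to (I : bool -> {set E}) j u b := if b == j then u |: I j else I b :\ u.

Lemma forestU1_span (A B : {set E}) u : forest B ->
  (forall z, z \in B -> linked A (s z) (t z)) -> ~~ linked A (s u) (t u) ->
  forest (u |: B).
Proof. by move=> fB BA nu; apply: forestU1 => //; apply: contra nu; apply: linked_span. Qed.

Lemma not_insertable I y j : ~~ insertable I y -> y \notin I j -> ~~ indep (y |: I j).
Proof. by move=> ny yj; apply: contra ny => iy; apply/existsP; exists j; rewrite yj. Qed.

Lemma indep_pair_insert I x : indep_pair I -> x \notin I true -> x \notin I false ->
  x != e -> insertable I x ->
  exists J, indep_pair J /\ J true :|: J false = x |: (I true :|: I false).
Proof.
move=> [d iI eI] x1 x2 xe /existsP [j /andP [xj ij]].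
exists (insert_in I j x); split; last first.
  case: j {xj ij}; apply/setP => y; rewrite /insert_in /= !inE; first by rewrite orbA.
  by rewrite orbCA.
split.
- case: j {xj ij} => y; rewrite /insert_in /= ?in_setU1.
    by case/orP => [/eqP ->|/d].
  by move=> yT; rewrite negb_or (d _ yT) andbT; apply: contraTneq yT => ->.
- by move=> b; rewrite /insert_in; case: eqP.
- move=> b; rewrite /insert_in; case: eqP => // _.
  by rewrite in_setU1 negb_or eq_sym xe eI.
Qed.

Lemma indep_pair_move I j u : indep_pair I -> u \in I (~~ j) -> u \notin I j ->
  indep (u |: I j) -> indep_pair (move_to I j u).
Proof.
move=> [d iI eI] uK uJ iu.
have ue : u != e by apply: contraNneq (eI (~~ j)) => <-.
split.
- case: j uK uJ iu => uK uJ iu y; rewrite /move_to /= !inE.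
    by case/orP => [/eqP ->|/d yF]; rewrite ?eqxx // negb_and yF orbT.
  by case/andP => yu /d yF; rewrite negb_or yF andbT.
- move=> b; rewrite /move_to; case: eqP => // _; apply: forestS (iI b) _.
  by apply: setUS; apply: subsetDl.
- move=> b; rewrite /move_to; case: eqP => _; rewrite !inE; last by rewrite (negbTE (eI b)) andbF.
  by rewrite negb_or eI andbT eq_sym.
Qed.

Lemma move_to_union (I : bool -> {set E}) j u : u \in I (~~ j) ->
  move_to I j u true :|: move_to I j u false = I true :|: I false.
Proof.
case: j => /= uK; apply/setP => y; rewrite /move_to /= !inE;
  by have [->|] := eqVneq y u; rewrite ?uK ?orbT.
Qed.

Lemma exchange_move I J u y w : indep_pair I -> u \notin I J -> indep (u |: I J) ->
  u \in I (~~ J) -> ~~ insertable I y -> ~~ insertable I w ->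
  exchange I y w -> exchange (move_to I J u) y w.
Proof.
move=> [_ iI eI] uJ iu uK ny nw /andP [ye /existsP [L /and3P [wL yL iy]]].
have wu : w != u by apply: contraNneq nw => ->; apply/existsP; exists J; rewrite uJ.
have yu : y != u by apply: contraNneq ny => ->; apply/existsP; exists J; rewrite uJ.
rewrite /exchange ye; apply/existsP; exists L; rewrite /move_to.
have [LJ|LJ] := eqVneq L J; last first.
  rewrite !inE wu wL /= negb_and yL orbT /=; apply: forestS iy _.
  by do 2 apply: setUS; apply/subsetP => x; rewrite !inE => /and3P [-> _ ->].
subst L; rewrite !inE wL orbT negb_or yu yL /=.
have yeIJ : linked (e |: I J) (s y) (t y).
  by apply: linked_of_not_forestU1 (iI J) _; rewrite setUCA; apply: not_insertable.
rewrite /indep; have -> : e |: (y |: ((u |: I J) :\ w)) = u |: (e |: (y |: (I J :\ w))).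
  apply/setP => x; rewrite !inE.
  by have [->|xu] := eqVneq x u; rewrite ?eqxx ?(eq_sym u w) ?wu ?orbT.
(* [y |: (I J :\ w)] lies in the span of [e |: I J], which does not span [u]. *)
apply: (forestU1_span (A := e |: I J) iy) => [z|].
  rewrite !in_setU1 => /or3P [/eqP->|/eqP->//|/setD1P [_ zJ]]; apply: linked_edge.
    exact: setU11.
  by rewrite in_setU1 zJ orbT.
move: iu; rewrite /indep setUCA => /forestP /(_ u (setU11 _ _)); rewrite setU1K //.
by rewrite in_setU1 negb_or uJ andbT; apply: contraNneq (eI (~~ J)) => <-.
Qed.

(* Move the first insertable [u] on the path into a part; the prefix before [u] stays a path. *)
Lemma indep_pair_augment I x0 p : indep_pair I -> x0 \notin I true -> x0 \notin I false ->
  x0 != e -> path (exchange I) x0 p -> insertable I (last x0 p) ->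
  exists J, indep_pair J /\ J true :|: J false = x0 |: (I true :|: I false).
Proof.
move: {2}(size p) (leqnn (size p)) => m; elim: m I p => [|m IH] I p.
  by case: p => // _ vI x1 x2 xe _ sk; apply: indep_pair_insert.
move=> sz vI x1 x2 xe pth sk.
have [sx|nsx] := boolP (insertable I x0); first exact: indep_pair_insert.
have hp : has (insertable I) p.
  apply/hasP; exists (last x0 p) => //; move: (mem_last x0 p); rewrite inE.
  by case/orP => // /eqP ex; move: sk; rewrite ex (negbTE nsx).
case: (split_find hp) sz pth => u q r su nq sz.
rewrite cat_path rcons_path => /andP [/andP [pq aqu] _].
have [J /andP [uJ iu]] := existsP su.
have [L /and3P [uL vL iv]] : exists L, [&& u \in I L, last x0 q \notin I L
    & indep (last x0 q |: (I L :\ u))] by case/andP: aqu => _ /existsP.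
have LJ : L = ~~ J.
  by case: L uL {vL iv}; case: J uJ {iu su} => //= uJ uL; rewrite uL in uJ.
subst L; rewrite -(move_to_union uL).
have x0u : x0 != u by apply: contraNneq nsx => ->.
apply: (IH (move_to I J u) q).
- by move: sz; rewrite size_cat size_rcons addSn ltnS; apply: leq_trans; apply: leq_addr.
- exact: indep_pair_move.
- by rewrite /move_to; case: eqP => [<-|_]; rewrite !inE ?negb_or ?negb_and ?x0u ?x1.
- by rewrite /move_to; case: eqP => [<-|_]; rewrite !inE ?negb_or ?negb_and ?x0u ?x2.
- exact: xe.
- apply: (sub_in_path (P := predC (insertable I))) pq; last by rewrite /= nsx all_predC.
  by move=> y w; rewrite !inE => ny nw; apply: exchange_move.
- apply/existsP; exists (~~ J); rewrite /move_to; case: eqP => [|_]; first by case: J {uJ iu su uL vL iv}.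
  by rewrite !inE negb_and vL orbT.
Qed.

End Partition.

Section Obstacle.
Variables (V E : finType) (s t : E -> V) (e : E).
Local Notation linked := (linked s t).
Local Notation indep := (indep s t e).
Local Notation indep_pair := (indep_pair s t e).
Local Notation exchange := (exchange s t e).
Local Notation insertable := (insertable s t e).

(* [e |: R] is spanned by each of two edge sets of total size at most [#|e |: R|], so [R]
   cannot be covered by two sets independent in [G/e]. *)
Definition obstacle (S : {set E}) := exists2 R : {set E}, R \subset S &
  exists K : bool -> {set E},
    (forall j z, z \in e |: R -> linked (K j) (s z) (t z)) /\
    #|K true| + #|K false| <= #|e |: R|.

Lemma exchange_closed_span I (R : {set E}) : indep_pair I ->
  (forall y w, y \in R -> exchange I y w -> w \in R) ->
  (forall y, y \in R -> ~~ insertable I y) -> e \notin R ->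
  forall j y, y \in R -> linked (e |: (I j :&: R)) (s y) (t y).
Proof.
move=> [_ iI _] closedR nR eR j y yR.
have ye : y != e by apply: contraNneq eR => <-.
have [yj|yj] := boolP (y \in I j).
  by apply: linked_edge; rewrite in_setU1 in_setI yj yR orbT.
have yIj : linked (e |: I j) (s y) (t y).
  by apply: linked_of_not_forestU1 (iI j) _; rewrite setUCA; apply: not_insertable (nR y yR) yj.
(* Otherwise a bridge [w \notin R] of [e |: I j] could be exchanged for [y]. *)
apply/negPn/negP => nyR.
have sub : e |: (I j :&: R) \subset e |: I j by apply: setUS; apply: subsetIl.
have [w [wA wS nw]] := exists_bridge (iI j) sub yIj nyR.
have we : w != e by apply: contraNneq wS => ->; rewrite setU11.
have wj : w \in I j by move: wA; rewrite in_setU1 (negbTE we).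
have /negP : w \notin R by move: wS; rewrite !inE (negbTE we) wj.
apply; apply: closedR yR _; rewrite /exchange ye; apply/existsP; exists j; rewrite wj yj /indep.
have -> : e |: (y |: (I j :\ w)) = y |: ((e |: I j) :\ w).
  apply/setP => x; rewrite !inE.
  by case: (eqVneq x e) => [->|xe]; rewrite ?(eq_sym e w) ?we ?orbT //= orbCA.
by apply: forestU1 nw; apply: forestS (iI j) (subsetDl _ _).
Qed.

Lemma card_split_parts I (R : {set E}) x0 : indep_pair I -> x0 \in R ->
  x0 \notin I true :|: I false -> R \subset x0 |: (I true :|: I false) -> e \notin R ->
  #|e |: (I true :&: R)| + #|e |: (I false :&: R)| = #|e |: R|.
Proof.
move=> [d _ _] x0R x0I RI eR.
have eIR j : e \notin I j :&: R by rewrite inE negb_and eR orbT.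
rewrite !cardsU1 eR !eIR (cardsD1 x0 R) x0R.
have -> : R :\ x0 = (I true :&: R) :|: (I false :&: R).
  apply/setP => y; rewrite !inE; have [->|yx] /= := eqVneq y x0.
    by move: x0I; rewrite inE negb_or => /andP [/negbTE -> /negbTE ->].
  have [yR|] := boolP (y \in R); rewrite ?andbF ?andbT //.
  by move/(subsetP RI): yR; rewrite !inE (negbTE yx).
have dis : (I true :&: R) :&: (I false :&: R) = set0.
  apply/setP => y; rewrite !inE.
  by case: (boolP (y \in I true)) => [/d /negbTE ->|]; rewrite ?andbF.
by move: (cardsUI (I true :&: R) (I false :&: R)); rewrite dis cards0 addn0 => ->; lia.
Qed.

(* The elements reachable from [x0] in the exchange graph form the obstacle. *)
Lemma obstacle_of_stuck I x0 : indep_pair I -> x0 \notin I true :|: I false -> x0 != e ->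
  ~~ [exists y, connect (exchange I) x0 y && insertable I y] ->
  obstacle (x0 |: (I true :|: I false)).
Proof.
move=> vI x0I x0e stuck; have [_ _ eI] := vI.
set R := [set y | connect (exchange I) x0 y].
have x0R : x0 \in R by rewrite inE connect0.
have RI : R \subset x0 |: (I true :|: I false).
  apply/subsetP => y; rewrite inE.
  apply: (connect_ind (P := fun y => y \in x0 |: _)); first exact: setU11.
  move=> a b _ /andP [_ /existsP [j /and3P [bj _ _]]].
  by rewrite !inE; case: j bj => ->; rewrite ?orbT.
have nR y : y \in R -> ~~ insertable I y.
  by rewrite inE => x0y; apply: contra stuck => iy; apply/existsP; exists y; rewrite x0y.
have eR : e \notin R.
  by apply/negP => /(subsetP RI); rewrite !inE eq_sym (negbTE x0e) !(negbTE (eI _)).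
exists R => //; exists (fun j => e |: (I j :&: R)); split.
  move=> j z /setU1P [->|zR]; first exact/linked_edge/setU11.
  apply: exchange_closed_span => // y w; rewrite !inE => x0y yw.
  exact: connect_trans x0y (connect1 yw).
by rewrite (card_split_parts vI x0R).
Qed.

Lemma indep_pair_or_obstacle (S : {set E}) : s e != t e -> e \notin S ->
  (exists I, indep_pair I /\ I true :|: I false = S) \/ obstacle S.
Proof.
move=> nle; move: {2}#|S| (erefl #|S|) => n; elim: n S => [|n IH] S hS eS.
  left; exists (fun=> set0); move/eqP: hS; rewrite cards_eq0 => /eqP ->.
  split; last exact: setU0.
  by split=> [x|j|j]; rewrite ?inE // /indep setU0; apply: forest1.
have [x0 x0S] : exists x0, x0 \in S by apply/set0Pn; rewrite -card_gt0 hS.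
have hS' : #|S :\ x0| = n by move: hS; rewrite (cardsD1 x0) x0S add1n => -[].
have eS' : e \notin S :\ x0 by rewrite inE negb_and eS orbT.
case: (IH _ hS' eS') => [[I [vI uI]]|[R RS obR]]; last first.
  by right; exists R => //; apply: subset_trans RS (subsetDl _ _).
have x0I : x0 \notin I true :|: I false by rewrite uI !inE eqxx.
have x0e : x0 != e by apply: contraNneq eS => <-.
rewrite -(setD1K x0S) -uI.
have [/existsP [y /andP [/connectP [p pth ->] iy]]|stuck] :=
  boolP [exists y, connect (exchange I) x0 y && insertable I y].
  left; move: x0I; rewrite inE negb_or => /andP [x1 x2].
  exact: indep_pair_augment vI x1 x2 x0e pth iy.
by right; apply: obstacle_of_stuck.
Qed.

End Obstacle.

Section Contraction.
Variables (V E : finType) (s t : E -> V) (e : E).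
Hypothesis nle : s e != t e.
Local Notation s' := (contr_s s t e).
Local Notation t' := (contr_t s t e).
Local Notation mg := (Defs.merge s t e).

Lemma merge_s : mg (s e) = s e.
Proof. by rewrite /Defs.merge (negbTE nle). Qed.

Lemma merge_t : mg (t e) = s e.
Proof. by rewrite /Defs.merge eqxx. Qed.

Lemma merge_id x : x != t e -> mg x = x.
Proof. by rewrite /Defs.merge => /negbTE ->. Qed.

Lemma merge_neq x : mg x != t e.
Proof. by rewrite /Defs.merge; case: (x =P t e) => [_|/eqP]. Qed.

Lemma linked_merge (L : {set E}) x : linked s t (e |: L) (mg x) x.
Proof.
rewrite /Defs.merge; case: eqP => [->|_]; last exact: linked_refl.
exact/linked_edge/setU11.
Qed.

Lemma linked_contr (L : {set E}) x y :
  linked s t (e |: L) x y -> linked s' t' L (mg x) (mg y).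
Proof.
move: y; apply: (connect_ind (P := fun y => linked s' t' L (mg x) (mg y))).
  exact: linked_refl.
move=> y w xy /adjP [z /setU1P [->|zL] yw].
  by case: yw => -[? ?]; subst; rewrite merge_s merge_t in xy *.
apply: linked_trans xy (linked_joins zL _).
by rewrite /joins /contr_s /contr_t; case: yw => -[? ?]; subst; rewrite !eqxx ?orbT.
Qed.

Lemma contr_linked (L : {set E}) a b : linked s' t' L a b -> linked s t (e |: L) a b.
Proof.
move: b; apply: (connect_ind (P := fun b => linked s t (e |: L) a b)).
  exact: linked_refl.
move=> y w ay /adjP [z zL yw]; apply: linked_trans ay _.
have zeL : z \in e |: L by rewrite setU1r.
have sz_tz : linked s t (e |: L) (mg (s z)) (mg (t z)).
  apply: linked_trans (linked_merge L (s z)) _.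
  by apply: linked_trans (linked_edge s t zeL) _; rewrite linked_sym linked_merge.
by case: yw => -[? ?]; subst; rewrite // linked_sym.
Qed.

Lemma forest_contr (L : {set E}) : e \notin L -> forest s t (e |: L) -> forest s' t' L.
Proof.
move=> eL /forestP fL; apply/forestP => z zL; apply/negP => /contr_linked h.
have ze : z != e by apply: contraNneq eL => <-.
have eLz : (e |: L) :\ z = e |: (L :\ z).
  by apply/setP => x; rewrite !inE; case: (eqVneq x e) => [->|]; rewrite ?(eq_sym e z) ?ze.
have := fL z (setU1r _ zL); rewrite eLz.
move/negP; apply; apply: linked_trans (linked_trans h (linked_merge _ _)).
by rewrite linked_sym linked_merge.
Qed.

Lemma contr_spanning_tree (S L T : {set E}) : e \notin L -> L \subset S ->
  forest s t (e |: L) -> (forall x y, linked s t T x y) -> #|T| <= #|e |: L| ->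
  spanning_tree s' t' (contr_del_V s t e) S L.
Proof.
move=> eL LS fL conT cT; split => //; split; last exact/forest_acyclic/forest_contr.
split; first by apply/set0Pn; exists (s e); rewrite !inE nle.
move=> x y; rewrite !inE !andbT => xt yt; rewrite -(merge_id xt) -(merge_id yt).
apply/linked_contr/(linked_span _ (conT x y)) => z _.
exact: (forest_spans fL (subsetT _) (fun z _ => conT (s z) (t z)) cT).
Qed.

End Contraction.

Section Atomic.
Variables (V E : finType) (s t : E -> V).
Local Notation linked := (linked s t).
Local Notation forest := (forest s t).

Lemma spanning_tree_linked W F T : spanning_tree s t W F T ->
  forall x y, x \in W -> y \in W -> linked T x y.
Proof. by case=> _ [[_ conT] _]. Qed.

Lemma spanning_tree_forest W F T : spanning_tree s t W F T -> forest T.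
Proof. by case=> _ [_ /acyclic_forest]. Qed.

Lemma spanning_tree_edge (F : {set E}) q : s q != t q -> q \in F ->
  spanning_tree s t [set s q; t q] F [set q].
Proof.
move=> nlq qF; split; first by rewrite sub1set.
split; last exact/forest_acyclic/forest1.
split; first by apply/set0Pn; exists (s q); rewrite set21.
have qq := linked_edge s t (set11 q).
by move=> x y /set2P [] -> /set2P [] ->; rewrite ?linked_refl //; move: qq; rewrite linked_sym.
Qed.

Lemma bispanning_set1 v : bispanning s t [set v] set0.
Proof.
split; first by move=> z; rewrite in_set0.
have tree : spanning_tree s t [set v] set0 set0.
  split=> //; split; last exact/forest_acyclic/forest0.
  by split=> [|x y /set1P -> /set1P ->]; [apply/set0Pn; exists v; rewrite inE|apply: linked_refl].
by exists set0, set0; split=> //; [rewrite disjoints_subset sub0set|rewrite setU0].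
Qed.

Definition component (F : {set E}) v := [set x | linked F v x].

Lemma component_closed (F : {set E}) v z :
  z \in F -> (s z \in component F v) = (t z \in component F v).
Proof.
move=> zF; rewrite !inE; apply/idP/idP => vz; first exact: linked_trans vz (linked_edge s t zF).
by apply: linked_trans vz _; rewrite linked_sym; apply: linked_edge.
Qed.

Lemma linked_restrict (L : {set E}) (W : {set V}) a b :
  (forall z, z \in L -> (s z \in W) = (t z \in W)) -> a \in W -> linked L a b ->
  linked (L :&: [set z | s z \in W]) a b.
Proof.
move=> closedW aW; move: b.
suff : forall b, linked L a b -> b \in W /\ linked (L :&: [set z | s z \in W]) a b.
  by move=> ab b /ab [].
apply: connect_ind; first by split => //; exact: linked_refl.
move=> y w [yW ay] /adjP [z zL yw].
have zLW : z \in L :&: [set z | s z \in W].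
  by rewrite !inE zL; case: yw => -[? ?]; subst; rewrite ?yW // closedW.
case: yw => -[? ?]; subst.
  by rewrite -closedW //; split => //; apply: linked_trans ay (linked_edge s t zLW).
rewrite -closedW // in yW; split => //.
by apply: linked_trans ay _; rewrite linked_sym; apply: linked_edge.
Qed.

Lemma bispanning_component (A B : {set E}) v : forest A -> forest B -> [disjoint A & B] ->
  (forall z, z \in A :|: B -> linked A (s z) (t z)) ->
  (forall z, z \in A :|: B -> linked B (s z) (t z)) ->
  let W := component (A :|: B) v in
  bispanning s t W ((A :|: B) :&: [set z | s z \in W]).
Proof.
move=> fA fB dAB spA spB W; set F := A :|: B.
have closedW (L : {set E}) : L \subset F -> forall z, z \in L -> (s z \in W) = (t z \in W).
  by move=> LF z /(subsetP LF); apply: component_closed.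
have tree (T : {set E}) : forest T -> T \subset F -> (forall z, z \in F -> linked T (s z) (t z)) ->
    spanning_tree s t W (F :&: [set z | s z \in W]) (T :&: [set z | s z \in W]).
  move=> fT TF spT; split; first exact: setSI.
  split; last exact/forest_acyclic/(forestS fT)/subsetIl.
  split; first by apply/set0Pn; exists v; rewrite inE linked_refl.
  have vW x : x \in W -> linked (T :&: [set z | s z \in W]) v x.
    by rewrite inE => vx; apply: linked_restrict; [exact: closedW|rewrite inE linked_refl|exact: linked_span vx].
  by move=> x y /vW vx /vW vy; apply: linked_trans vy; rewrite linked_sym.
split.
  move=> z /setIP [zF]; rewrite inE => zW; split => //.
  by rewrite -(closedW F (subxx _) z zF).
exists (A :&: [set z | s z \in W]), (B :&: [set z | s z \in W]); split.
- exact: tree (subsetUl _ _) spA.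
- exact: tree (subsetUr _ _) spB.
- exact: disjointW (subsetIl _ _) (subsetIl _ _) dAB.
- by rewrite -setIUl.
Qed.

(* An obstacle would exhibit a bispanning subgraph through [e] avoiding [f]. *)
Lemma atomic_no_obstacle e f (S : {set E}) :
  atomic s t -> e != f -> f \notin S -> ~ obstacle s t e S.
Proof.
case=> [[_ [T1 [T2 [sp1 sp2 dT un]]]] atomicG] ef fS [R RS [K [spK cK]]].
set F := e |: R in spK cK *.
have fT1 := forestS (spanning_tree_forest sp1) (subsetIl T1 F).
have fT2 := forestS (spanning_tree_forest sp2) (subsetIl T2 F).
have c1 : #|T1 :&: F| <= #|K true|.
  by apply: forest_card_le fT1 _ => z /setIP [_]; apply: spK.
have c2 : #|T2 :&: F| <= #|K false|.
  by apply: forest_card_le fT2 _ => z /setIP [_]; apply: spK.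
have uF : (T1 :&: F) :|: (T2 :&: F) = F by rewrite -setIUl un setTI.
have dF : [disjoint T1 :&: F & T2 :&: F].
  exact: disjointW (subsetIl _ _) (subsetIl _ _) dT.
have cF : #|T1 :&: F| + #|T2 :&: F| = #|F|.
  by rewrite -cardsUI uF (disjoint_setI0 dF) cards0 addn0.
have sp (j : bool) (T : {set E}) : T \subset F -> forest T -> #|K j| <= #|T| ->
    forall z, z \in (T1 :&: F) :|: (T2 :&: F) -> linked T (s z) (t z).
  by move=> TF fT cT z; rewrite uF => zF; apply: forest_spans fT TF (spK j) cT z zF.
have := bispanning_component (s e) fT1 fT2 dF
  (sp true _ (subsetIr _ _) fT1 ltac:(lia)) (sp false _ (subsetIr _ _) fT2 ltac:(lia)).
rewrite uF => /atomicG [[_ FT]|[v [_ F0]]].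
  have : f \in F :&: [set z | s z \in component F (s e)] by rewrite FT inE.
  by case/setIP => /setU1P [fe|/(subsetP RS) fS']; [rewrite fe eqxx in ef|rewrite fS' in fS].
have : e \in F :&: [set z | s z \in component F (s e)] by rewrite !inE eqxx linked_refl.
by rewrite F0 inE.
Qed.

End Atomic.

Section ContractionDeletion.
Variables (V E : finType) (s t : E -> V) (e : E).
Local Notation ends := [set s e; t e].

Lemma contr_bispanning_of_partition (S : {set E}) (I : bool -> {set E}) (T1 T2 : {set E}) :
  s e != t e -> spanning_tree s t setT setT T1 -> spanning_tree s t setT setT T2 ->
  #|S| + 2 = #|T1| + #|T2| -> indep_pair s t e I -> I true :|: I false = S ->
  bispanning (contr_s s t e) (contr_t s t e) (contr_del_V s t e) S.
Proof.
move=> nle sp1 sp2 cS vI uI; have [dI iI eI] := vI.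
have conT (j : bool) x y : linked s t (if j then T1 else T2) x y.
  by case: j; [apply: (spanning_tree_linked sp1)|apply: (spanning_tree_linked sp2)]; rewrite inE.
have le j : #|e |: I j| <= #|if j then T1 else T2|.
  by apply: forest_card_le (iI j) _ => z _; apply: conT.
have cI : #|e |: I true| + #|e |: I false| = #|S| + 2.
  have I0 : I true :&: I false = set0.
    by apply/setP => x; rewrite !inE; apply/negP => /andP [/dI /negP].
  by have := cardsUI (I true) (I false); rewrite !cardsU1 !eI I0 cards0 uI; lia.
have tree j : spanning_tree (contr_s s t e) (contr_t s t e) (contr_del_V s t e) S (I j).
  apply: (contr_spanning_tree nle (eI j) _ (iI j) (conT j)).
    by rewrite -uI; case: j; [apply: subsetUl|apply: subsetUr].
  by move: (le true) (le false); case: j; lia.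
split; first by move=> z _; rewrite !inE !merge_neq.
exists (I true), (I false); split; [exact: tree|exact: tree| |exact: uI].
by rewrite disjoints_subset; apply/subsetP => x /dI; rewrite inE.
Qed.

Lemma contr_del_E_no_parallel f : s e != t e ->
  ~~ [exists z, [&& z != e, s z \in ends & t z \in ends]] ->
  contr_del_E s t e f = [set: E] :\ e :\ f.
Proof.
move=> nle npar; apply/setP => z; rewrite !in_setD1 in_setT in_set andbT; congr (_ && _).
have [->|ze] := eqVneq z e; first by rewrite !inE !eqxx ?orbT.
by apply/negP => zends; case/existsP: npar; exists z; rewrite ze.
Qed.

Lemma contr_del_parallel f p : (forall z, s z != t z) -> atomic s t -> p != e ->
  s p \in ends -> t p \in ends ->
  bispanning (contr_s s t e) (contr_t s t e) (contr_del_V s t e) (contr_del_E s t e f).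
Proof.
move=> noloop [_ atomicG] pe sp tp.
have endsp : [set s p; t p] = ends.
  apply/eqP; rewrite eqEcard !cards2 (noloop p) (noloop e) leqnn andbT.
  by apply/subsetP => x /set2P [] ->.
have : bispanning s t ends [set e; p].
  split; first by move=> z /set2P [] ->; split; rewrite ?set21 ?set22.
  exists [set e], [set p]; split.
  - exact: spanning_tree_edge (noloop e) (set21 e p).
  - by rewrite -endsp; apply: spanning_tree_edge (noloop p) (set22 e p).
  - by rewrite disjoints1 inE eq_sym.
  - by [].
case/atomicG => [[VT _]|[v [_ /setP /(_ e)]]]; last by rewrite set21 inE.
have -> : contr_del_E s t e f = set0.
  by apply/setP => z; rewrite /contr_del_E VT !inE andbF.
have -> : contr_del_V s t e = [set s e].
  apply/setP => x; rewrite !inE andbT.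
  have : x \in ends by rewrite VT inE.
  by case/set2P => ->; rewrite eqxx ?(noloop e) // eq_sym (negbTE (noloop e)).
exact: bispanning_set1.
Qed.

End ContractionDeletion.

Theorem mainTheorem17 (V E : finType) (s t : E -> V)
  (noloop : forall z : E, s z != t z)
  (Hat : atomic s t) (e f : E) (hef : e != f) :
  bispanning (contr_s s t e) (contr_t s t e)
             (contr_del_V s t e) (contr_del_E s t e f).
Proof.
have nle := noloop e.
have [[_ [T1 [T2 [sp1 sp2 dT uT]]]] _] := Hat.
have [/existsP [p /and3P [pe sp tp]]|npar] :=
  boolP [exists p, [&& p != e, s p \in [set s e; t e] & t p \in [set s e; t e]]].
  exact: contr_del_parallel noloop Hat pe sp tp.
have SE := contr_del_E_no_parallel f nle npar; set S := contr_del_E s t e f in SE *.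
have eS : e \notin S by rewrite SE !inE eqxx andbF.
have fS : f \notin S by rewrite SE !inE eqxx.
have [[I [vI uI]]|ob] := indep_pair_or_obstacle nle eS.
  apply: contr_bispanning_of_partition nle sp1 sp2 _ vI uI.
  rewrite -cardsUI uT (disjoint_setI0 dT) cards0 addn0 SE.
  by rewrite (cardsD1 e [set: E]) (cardsD1 f ([set: E] :\ e)) !inE eq_sym hef; lia.
by case: (atomic_no_obstacle Hat hef fS ob).
Qed.
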